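(* Let $\mathbf x^{(1)},\dots,\mathbf x^{(M)}\in\mathbb R^s$ be pairwise distinct covering templates. Consider ReLU activation with max pooling ($\sigma(z)=\max\{0,z\}$, $P=\max$). Then the shallow ConvNet is universal: for every output index $y$ and every tensor $\mathcal A\in\mathbb R^{M\times\cdots\times M}$ of order $N$, there exist a number of hidden channels $Z$, representation functions $f_{\theta_1},\dots,f_{\theta_M}\in\mathcal F$ and weights $\{\mathbf a^{z,i}\}$, $\mathbf a^y$ such that the grid tensor satisfies $\mathcal A(h^S_y)=\mathcal A$. The same holds for the deep ConvNet (for suitable channel numbers $r_0,\dots,r_{L-1}$, representation functions in $\mathcal F$ and weights), i.e. the deep ConvNet with ReLU activation and max pooling is universal as well.
   Context: Inputs are $X=(\mathbf x_1,\dots,\mathbf x_N)\in(\mathbb R^s)^N$ ($N$ ''patches''). Representation functions are taken from a parametric family $\mathcal F=\{f_\theta:\mathbb R^s\to\mathbb R:\theta\in\Theta\}$ assumed throughout to satisfy: (continuity) $f_\theta(\mathbf x)$ is continuous with respect to both $\theta$ and $\mathbf x$; (non-degeneracy) for any pairwise distinct $\mathbf x^{(1)},\dots,\mathbf x^{(M)}\in\mathbb R^s$ there exist $f_{\theta_1},\dots,f_{\theta_M}\in\mathcal F$ such that the matrix $F\in\mathbb R^{M\times M}$ with $F_{i,d}=f_{\theta_d}(\mathbf x^{(i)})$ is non-singular. Shallow ConvNet with activation $\sigma$, pooling $P$ and $Z$ hidden channels: given $f_{\theta_1},\dots,f_{\theta_M}\in\mathcal F$, weights $\mathbf a^{z,i}\in\mathbb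 R^M$ ($z\in[Z]$, $i\in[N]$) and output weights $\mathbf a^y\in\mathbb R^Z$, its $y$-th score function is $h^S_y(X)=\sum_{z=1}^Z a^y_z\, P_{i\in[N]}\Big(\sigma\big(\sum_{d=1}^M a^{z,i}_d f_{\theta_d}(\mathbf x_i)\big)\Big)$, where $P$ is applied to the $N$ values indexed by $i$. Deep ConvNet ($N=2^L$, $L\ge1$) with channel numbers $r_0,\dots,r_{L-1}$: given $f_{\theta_1},\dots,f_{\theta_M}\in\mathcal F$, weights $\mathbf a^{0,j,\gamma}\in\mathbb R^M$ ($j\in[N],\gamma\in[r_0]$), $\mathbf a^{l,j,\gamma}\in\mathbb R^{r_{l-1}}$ ($l\in[L-1]$, $j\in[N/2^l]$, $\gamma\in[r_l]$), and $\mathbf a^{L,1,y}\in\mathbb R^{r_{L-1}}$, set $u^0_{j,\gamma}=\sigma(\sum_{d}a^{0,j,\gamma}_d f_{\theta_d}(\mathbf x_j))$, and for $l=0,\dots,L-1$: $v^l_{j,\gamma}=P(u^l_{2j-1,\gamma},u^l_{2j,\gamma})$ for $j\in[N/2^{l+1}]$, and (for $l\ge1$) $u^l_{j,\gamma}=\sigma(\sum_{\alpha=1}^{r_{l-1}}a^{l,j,\gamma}_\alpha v^{l-1}_{j,\alpha})$ for $j\in[N/2^l]$, $\gamma\in[r_l]$. The score function is $h^D_y(X)=\sum_{\alpha=1}^{r_{L-1}}a^{L,1,y}_\alpha v^{L-1}_{1,\alpha}$. Templates and grid tensors: for templates $\mathbf x^{(1)},\dots,\mathbf x^{(M)}\in\mathbb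 R^s$, the grid tensor of a function $h:(\mathbb R^s)^N\to\mathbb R$ is the order-$N$ tensor $\mathcal A(h)\in\mathbb R^{M\times\cdots\times M}$ with $\mathcal A(h)_{d_1,\dots,d_N}=h(\mathbf x^{(d_1)},\dots,\mathbf x^{(d_N)})$. Templates are called covering if score functions are identified whenever their grid tensors with respect to these templates coincide (values outside the grid are irrelevant for classification); a network is universal if (w.r.t. covering templates) every tensor is the grid tensor of some score function it realizes. *)

From HB Require Import structures.
From mathcomp Require Import all_boot all_order all_algebra.
From mathcomp Require Import all_classical all_reals topology normedtype.
Set Implicit Arguments. Unset Strict Implicit. Unset Printing Implicit Defensive.
Import Order.TTheory GRing.Theory Num.Theory.
Import numFieldNormedType.Exports.
Local Open Scope ring_scope.

Section Defs.
Variable R : realType.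

Definition relu (z : R) : R := Num.max 0 z.

(* max pooling over the N values v 0, ..., v (N-1) (N >= 1 in use) *)
Definition maxpool (N : nat) (v : 'I_N -> R) : R :=
  let s := [seq v i | i <- enum 'I_N] in foldr Num.max (head 0 s) s.

Definition fam_continuous (Theta : topologicalType) (s : nat)
  (f : Theta -> 'rV[R]_s -> R) : Prop :=
  continuous (fun p : Theta * 'rV[R]_s => f p.1 p.2).

Definition fam_nondegenerate (Theta : Type) (s : nat)
  (f : Theta -> 'rV[R]_s -> R) : Prop :=
  forall (M : nat) (x : 'I_M -> 'rV[R]_s), injective x ->
    exists th : 'I_M -> Theta,
      (\matrix_(i < M, d < M) f (th d) (x i)) \in unitmx.

Definition shallow_score (Theta : Type) (s M N Z : nat)
  (f : Theta -> 'rV[R]_s -> R) (th : 'I_M -> Theta)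
  (a : 'I_Z -> 'I_N -> 'I_M -> R) (ay : 'I_Z -> R)
  (X : 'I_N -> 'rV[R]_s) : R :=
  \sum_(z < Z) ay z *
     maxpool (fun i : 'I_N => relu (\sum_(d < M) a z i d * f (th d) (X i))).

(* Deep ConvNet (0-based indices: the paper's patch j, pair (2j-1,2j)
   become j, pair (2j, 2j+1)).  r l = r_l channel numbers;
   a0 j g d = a^{0,j,g}_d ; al l j g al' = a^{l,j,g}_{al'} (l >= 1) ;
   aL al' = a^{L,1,y}_{al'}.  Patches are indexed by nat; X j = x_{j+1}. *)
Section Deep.
Variables (Theta : Type) (s M : nat) (f : Theta -> 'rV[R]_s -> R)
  (th : 'I_M -> Theta) (r : nat -> nat)
  (a0 : nat -> nat -> nat -> R) (al : nat -> nat -> nat -> nat -> R)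
  (X : nat -> 'rV[R]_s).

Fixpoint deep_u (l j g : nat) : R :=
  match l with
  | 0 => relu (\sum_(d < M) a0 j g d * f (th d) (X j))
  | l'.+1 => relu (\sum_(b < r l')
       al l j g b * Num.max (deep_u l' (2 * j) b) (deep_u l' (2 * j + 1) b))
  end.

Definition deep_v (l j g : nat) : R :=
  Num.max (deep_u l (2 * j) g) (deep_u l (2 * j + 1) g).

Definition deep_score_nat (L : nat) (aL : nat -> R) : R :=
  \sum_(b < r L.-1) aL b * deep_v L.-1 0 b.
End Deep.

Definition deep_score (Theta : Type) (s M L : nat) (f : Theta -> 'rV[R]_s -> R)
  (th : 'I_M -> Theta) (r : nat -> nat)
  (a0 : nat -> nat -> nat -> R) (al : nat -> nat -> nat -> nat -> R)
  (aL : nat -> R) (X : 'I_(2 ^ L) -> 'rV[R]_s) : R :=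
  deep_score_nat f th r a0 al
    (fun j => if insub j is Some k then X k else 0) L aL.

End Defs.

From HB Require Import structures.
From mathcomp Require Import all_boot all_order all_algebra.
From mathcomp Require Import all_classical all_reals topology normedtype.
From mathcomp Require Import zify.
Import Order.TTheory GRing.Theory Num.Theory.
Import numFieldNormedType.Exports.
Set Implicit Arguments. Unset Strict Implicit. Unset Printing Implicit Defensive.
Local Open Scope ring_scope.

(* By non-degeneracy the representation layer can put any prescribed values
   on the templates, so every patch can be sent to a 0/1 indicator, which
   ReLU leaves unchanged and max pooling turns into a disjunction over the
   patches.  For each grid index e a hidden channel fires iff the input index
   d differs from e somewhere; together with a constant channel, the output
   weights sum_e A e for the constant channel and - A e for channel e give
   sum_e A e - sum_(e != d) A e = A d.  In the deep network the layers above
   the first merely route channel g to channel g, so the tree of poolings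
   computes the same disjunction over all patches. *)

Lemma sum_option (R : nmodType) (T : finType) (F : option T -> R) :
  \sum_(e : option T) F e = F None + \sum_(e : T) F (Some e).
Proof.
rewrite (bigD1 None) //= (reindex_omap Some id) => [|[]//].
by congr (_ + _); apply: eq_bigl => e; rewrite eqxx.
Qed.

Lemma sum_mul_neq (R : pzRingType) (T : finType) (A : T -> R) (t : T) :
  \sum_(e : T) A e * (e != t)%:R = \sum_(e : T) A e - A t.
Proof.
rewrite [in RHS](bigD1 t) //= addrC addrK (bigD1 t) //= eqxx mulr0 add0r.
by apply: eq_bigr => e ->; rewrite mulr1.
Qed.

Lemma has_insub_iota n (Q : pred 'I_n) :
  has (fun j => oapp Q false (insub j)) (iota 0 n) = [exists i, Q i].
Proof.
apply/hasP/existsP => [[j _]|[i Qi]]; first by case: insub => [i Qi|//]; exists i.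
by exists (val i); rewrite ?mem_iota ?ltn_ord //= valK.
Qed.

Section Indicators.
Variable R : realType.

Lemma relu_nat (b : bool) : relu (b%:R : R) = b%:R.
Proof. by rewrite /relu max_r ?ler0n. Qed.

Lemma max_nat (a b : bool) : Num.max (a%:R : R) b%:R = (a || b)%:R.
Proof.
by case: a; case: b; rewrite /= ?maxxx //; [apply: max_l | apply: max_r]; exact: ler01.
Qed.

Lemma foldr_max_nat (c : bool) (bs : seq bool) :
  foldr Num.max (c%:R : R) [seq b%:R | b : bool <- bs] = (c || has id bs)%:R.
Proof.
elim: bs => [|b bs IH] /=; first by rewrite orbF.
by rewrite IH max_nat orbCA.
Qed.

Lemma maxpool_nat N (P : pred 'I_N) :
  maxpool (fun i => (P i)%:R : R) = [exists i, P i]%:R.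
Proof.
rewrite /maxpool (map_comp (fun b : bool => b%:R : R) P).
set bs := [seq P i | i <- enum 'I_N].
have -> : head 0 [seq b%:R : R | b : bool <- bs] = (head false bs)%:R by case: bs.
rewrite foldr_max_nat; congr (nat_of_bool _)%:R.
have -> : head false bs || has id bs = has id bs by case: bs => //= b bs; rewrite orbA orbb.
by rewrite has_map; apply/hasP/existsP => [[i]|[i Pi]]; [exists i | exists i; rewrite ?mem_enum].
Qed.

Lemma max_tree_nat (U : nat -> nat -> R) (P : pred nat) :
  (forall j, U 0 j = (P j)%:R) ->
  (forall l j, U l.+1 j = Num.max (U l (2 * j)) (U l (2 * j + 1))) ->
  forall l j, U l j = (has P (iota (j * 2 ^ l) (2 ^ l)))%:R.
Proof.
move=> U0 US; elim=> [|l IH] j; first by rewrite U0 muln1 /= orbF.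
rewrite US !IH max_nat -has_cat.
have -> : ((2 * j + 1) * 2 ^ l = 2 * j * 2 ^ l + 2 ^ l)%N by lia.
rewrite -iotaD expnS.
by congr (nat_of_bool (has _ (iota _ _)))%:R; lia.
Qed.

End Indicators.

Lemma nondegenerate_interpolation (R : realType) (Theta : Type) s
    (f : Theta -> 'rV[R]_s -> R) M (xt : 'I_M -> 'rV[R]_s) :
  fam_nondegenerate f -> injective xt ->
  exists (th : 'I_M -> Theta) (c : ('I_M -> R) -> 'I_M -> R),
    forall g k, \sum_(d < M) c g d * f (th d) (xt k) = g k.
Proof.
move=> Hnd Hxt; have [th HF] := Hnd M xt Hxt.
set F := \matrix_(i < M, d < M) f (th d) (xt i).
exists th, (fun g d => (invmx F *m \col_j g j) d 0) => g k.
move/matrixP/(_ k 0): (mulKVmx HF (\col_j g j)); rewrite !mxE => <-.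
by apply: eq_bigr => d _; rewrite mulrC; congr (_ * _); rewrite mxE.
Qed.

Section Detectors.
Variables (R : realType) (N M : nat).

Definition detector (e : option {ffun 'I_N -> 'I_M}) (i : 'I_N) (k : 'I_M) : bool :=
  if e is Some e then k != e i else true.

Definition detector_weight (A : ('I_N -> 'I_M) -> R) (e : option {ffun 'I_N -> 'I_M}) : R :=
  if e is Some e then - A e else \sum_(e : {ffun 'I_N -> 'I_M}) A e.

Lemma sum_detectors A (d : 'I_N -> 'I_M) : (0 < N)%N ->
  \sum_(e : option {ffun 'I_N -> 'I_M})
     detector_weight A e * [exists i, detector e i (d i)]%:R = A d.
Proof.
move=> HN; rewrite sum_option /= (existsb (Ordinal HN)) //= mulr1.
set fd := [ffun i => d i].
have Efd : A fd = A d by congr A; apply: funext => i; rewrite ffunE.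
have mismatch (e : {ffun 'I_N -> 'I_M}) : [exists i, detector (Some e) i (d i)] = (e != fd).
  rewrite -negb_forall; congr (~~ _); apply/forallP/eqP => [Hde|-> i]; last by rewrite ffunE.
  by apply/ffunP => i; rewrite ffunE; apply/esym/eqP.
under [X in _ + X]eq_bigr => e _ do rewrite mismatch mulNr.
by rewrite sumrN sum_mul_neq opprB addrC subrK Efd.
Qed.

End Detectors.

Section Networks.
Variables (R : realType) (Theta : Type) (s M : nat) (f : Theta -> 'rV[R]_s -> R).
Variables (xt : 'I_M -> 'rV[R]_s) (th : 'I_M -> Theta) (c : ('I_M -> R) -> 'I_M -> R).
Hypothesis interp : forall g k, \sum_(d < M) c g d * f (th d) (xt k) = g k.

Definition nchannels N := #|{: option {ffun 'I_N -> 'I_M}}|.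

Definition detector_coef N (z : 'I_(nchannels N)) (i : 'I_N) : 'I_M -> R :=
  c (fun k => (detector (enum_val z) i k)%:R).

Definition readout N (A : ('I_N -> 'I_M) -> R) (z : 'I_(nchannels N)) : R :=
  detector_weight A (enum_val z).

Lemma shallow_detectors_realize N (A : ('I_N -> 'I_M) -> R) (d : 'I_N -> 'I_M) :
  (0 < N)%N ->
  shallow_score f th (@detector_coef N) (readout A) (fun i => xt (d i)) = A d.
Proof.
move=> HN; rewrite -(sum_detectors A d HN) (big_enum_val _ (A := {: option _})) /=.
apply: eq_bigr => z _; congr (_ * _).
under eq_fun => i do rewrite interp relu_nat.
exact: maxpool_nat.
Qed.

Section Deep.
Variable L : nat.
Local Notation N := (2 ^ L.+1)%N.

Definition deep_coef (j g k : nat) : R :=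
  match insub j, insub g, insub k with
  | Some i, Some z, Some k => @detector_coef N z i k
  | _, _, _ => 0
  end.

Definition deep_routing (l j g b : nat) : R := (b == g)%:R.

Definition deep_readout (A : ('I_N -> 'I_M) -> R) (b : nat) : R :=
  if insub b is Some z then readout A z else 0.

Variable X : nat -> 'rV[R]_s.
Local Notation u := (deep_u f th (fun=> nchannels N) deep_coef deep_routing X).

Lemma deep_u_ge0 l j g : 0 <= u l j g.
Proof. by case: l => [|l]; rewrite /= /relu le_max lexx. Qed.

Lemma deep_u_routing l j (g : 'I_(nchannels N)) :
  u l.+1 j g = Num.max (u l (2 * j) g) (u l (2 * j + 1) g).
Proof.
rewrite /= (bigD1 g) //= /deep_routing eqxx mul1r big1 ?addr0.
  by rewrite /relu max_r // le_max deep_u_ge0.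
by move=> b /negbTE; rewrite -val_eqE => ->; rewrite mul0r.
Qed.

Lemma deep_u_leaf (d : 'I_N -> 'I_M) (g : 'I_(nchannels N)) j :
  X j = (if insub j is Some i then xt (d i) else 0) ->
  u 0 j g = (oapp (fun i => detector (enum_val g) i (d i)) false (insub j))%:R.
Proof.
rewrite /= /deep_coef valK; case: insub => [i ->|_] /=.
  by under eq_bigr => k _ do rewrite valK; rewrite interp relu_nat.
by rewrite big1 /relu ?maxxx // => k _; rewrite mul0r.
Qed.

Lemma deep_u_detects (d : 'I_N -> 'I_M) (g : 'I_(nchannels N)) :
  (forall j, X j = if insub j is Some i then xt (d i) else 0) ->
  forall l j, u l j g = (has (fun k => oapp (fun i => detector (enum_val g) i (d i)) false
                                           (insub k))
                           (iota (j * 2 ^ l) (2 ^ l)))%:R.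
Proof.
by move=> HX; apply: max_tree_nat => [j|l j]; [exact: deep_u_leaf | exact: deep_u_routing].
Qed.

End Deep.

Lemma deep_detectors_realize L (A : ('I_(2 ^ L.+1) -> 'I_M) -> R) d :
  deep_score f th (fun=> nchannels (2 ^ L.+1)) (@deep_coef L) deep_routing
    (deep_readout A) (fun i => xt (d i)) = A d.
Proof.
rewrite -(sum_detectors A d (expn_gt0 2 L.+1)) (big_enum_val _ (A := {: option _})) /=.
apply: eq_bigr => g _; rewrite /deep_readout valK; congr (_ * _).
by rewrite /deep_v -deep_u_routing (deep_u_detects (d := d)) // mul0n has_insub_iota.
Qed.

End Networks.

Theorem claim4 (R : realType) (Theta : topologicalType) (s : nat)
  (f : Theta -> 'rV[R]_s -> R)
  (Hcont : fam_continuous f) (Hnd : fam_nondegenerate f)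
  (M : nat) (xt : 'I_M -> 'rV[R]_s) (Hdist : injective xt) :
  (forall (N : nat), (0 < N)%N ->
     forall A : ('I_N -> 'I_M) -> R,
     exists (Z : nat) (th : 'I_M -> Theta)
            (a : 'I_Z -> 'I_N -> 'I_M -> R) (ay : 'I_Z -> R),
       forall d : 'I_N -> 'I_M,
         shallow_score f th a ay (fun i => xt (d i)) = A d)
  /\
  (forall (L : nat), (0 < L)%N ->
     forall A : ('I_(2 ^ L) -> 'I_M) -> R,
     exists (r : nat -> nat) (th : 'I_M -> Theta)
            (a0 : nat -> nat -> nat -> R) (al : nat -> nat -> nat -> nat -> R)
            (aL : nat -> R),
       forall d : 'I_(2 ^ L) -> 'I_M,
         deep_score f th r a0 al aL (fun i => xt (d i)) = A d).
Proof.
have [th [c interp]] := nondegenerate_interpolation Hnd Hdist.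
split=> [N HN A | [//|L] _ A].
  exists (nchannels M N), th, (detector_coef c (N := N)), (readout A) => d.
  exact: shallow_detectors_realize.
exists (fun=> nchannels M (2 ^ L.+1)), th, (deep_coef c L), (@deep_routing R),
  (deep_readout A) => d.
exact: deep_detectors_realize.
Qed.
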